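(* Consider $\dot{\mathbf{x}}(s)=f(\mathbf{x}(s),\mathbf{u}(s))$, $s\in[-t,0]$, $\mathbf{x}(-t)=x$, with $f$ Lipschitz in the state and measurable controls in $U\subset\mathbb{R}^{n_u}$; let $g$ be Lipschitz. Let $\mathcal{D}=\{(x_i,u_i,v_i)\}_{i=1}^N$ with $u_i\in U$, $v_i=f(x_i,u_i)$, and let $\mathcal{E}$ be a closed-valued map with $f(x,u_i)-v_i\in\mathcal{E}(x;x_i)$ for all $i$ and all $x$. Define (1) $V(x,t)=\sup_{\mathbf{u}(\cdot)}\min_{s\in[-t,0]}g(\mathbf{x}(s))$; (2) $\widetilde{V}(x,t)=\sup_{\widetilde{\mathbf{u}}(\cdot)}\min_{s\in[-t,0]}g(\widetilde{\mathbf{x}}(s))$, where $\widetilde{\mathbf{x}}$ solves the same dynamics from $x$ at time $-t$ with controls restricted to $\widetilde{\mathbf{u}}(s)\in\{u_i\}_{i=1}^N$; (3) $\widehat{V}(x,t)=\inf_{\xi_w}\sup_{\mathbf{v}(\cdot)}\min_{s\in[-t,0]}g(\widehat{\mathbf{x}}(s))$ for the game $\dot{\widehat{\mathbf{x}}}(s)=\mathbf{v}(s)+\mathbf{w}(s)$, $\widehat{\mathbf{x}}(-t)=x$, with leader action $\mathbf{v}(s)\in\{v_i\}_{i=1}^N$, follower action $\mathbf{w}(s)\in W(\widehat{\mathbf{x}}(s),\mathbf{v}(s))$ where $W(x,v_j)=\mathcal{E}(x;x_j)$, and $\xi_w$ ranging over follower non-anticipative strategies. Then $\widehat{V}(x,t)\le\widetilde{V}(x,t)\le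 V(x,t)$ for all $x\in\mathbb{R}^{n_x}$ and $t\ge0$.
   Context: A non-anticipative strategy $\xi_w$ maps leader signals $\mathbf{v}(\cdot)$ to follower signals $\mathbf{w}(\cdot)$ such that if two leader signals agree on $[-t,s]$, so do the images on $[-t,s]$. *)

From HB Require Import structures.
From mathcomp Require Import all_boot all_order all_algebra.
From mathcomp Require Import all_classical all_reals all_analysis.
Set Implicit Arguments. Unset Strict Implicit. Unset Printing Implicit Defensive.
Import Order.TTheory GRing.Theory Num.Theory.
Import numFieldNormedType.Exports.
Local Open Scope classical_set_scope.
Local Open Scope ring_scope.

Section Defs.
Variable R : realType.
Notation vec n := 'rV[R]_n.
Notation mu := (@lebesgue_measure R).

Definition horizon (t : R) : set R := `[- t, 0].

(* [xs] is the (integral-form / Caratheodory) solution on [-t,0] of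
   xs' = h, xs(-t) = x0: every component of h is Lebesgue integrable on
   [-t,0] and xs(s) = x0 + int_{-t}^s h for all s in [-t,0]. *)
Definition sol_int (n : nat) (t : R) (x0 : vec n) (h : R -> vec n)
  (xs : R -> vec n) : Prop :=
  (forall k : 'I_n, mu.-integrable (horizon t) (fun s => (h s 0 k)%:E)) /\
  (forall s, horizon t s -> forall k : 'I_n,
     (xs s 0 k)%:E = (x0 0 k)%:E + (\int[mu]_(tau in `[(- t)%R, s]) (h tau 0 k)%:E)%E).

Definition cost (n : nat) (g : vec n -> R) (t : R) (xs : R -> vec n) : \bar R :=
  ereal_inf [set (g (xs s))%:E | s in horizon t].

Definition admissible_control (m : nat) (t : R) (A : set (vec m))
  (u : R -> vec m) : Prop :=
  (forall k : 'I_m, measurable_fun (horizon t) (fun s => u s 0 k)) /\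
  (forall s, horizon t s -> A (u s)).

Definition value_fun (nx nu : nat) (f : vec nx -> vec nu -> vec nx)
  (g : vec nx -> R) (A : set (vec nu)) (x : vec nx) (t : R) : \bar R :=
  ereal_sup [set cost g t xs | xs in
    [set xs | exists u, admissible_control t A u /\
                        sol_int t x (fun s => f (xs s) (u s)) xs]].

(* Leader signals: measurable choices of a data index i(s) in 'I_N on
   [-t,0]; the leader's action is v(s) = v_{i(s)}. *)
Definition leader_signal (N : nat) (t : R) (sigma : R -> 'I_N) : Prop :=
  forall i : 'I_N, measurable (horizon t `&` (sigma @^-1` [set i])).

Definition non_anticipative (nx N : nat) (t : R)
  (xi : (R -> 'I_N) -> (R -> vec nx)) : Prop :=
  forall sigma1 sigma2, leader_signal t sigma1 -> leader_signal t sigma2 ->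
  forall s, horizon t s ->
    (forall tau, [set` `[- t, s]] tau -> sigma1 tau = sigma2 tau) ->
    (forall tau, [set` `[- t, s]] tau -> xi sigma1 tau = xi sigma2 tau).

Definition game_traj (nx N : nat) (vd : 'I_N -> vec nx) (t : R) (x : vec nx)
  (sigma : R -> 'I_N) (w : R -> vec nx) (xh : R -> vec nx) : Prop :=
  sol_int t x (fun s => vd (sigma s) + w s) xh.

Definition admissible_strategy (nx N : nat) (xd vd : 'I_N -> vec nx)
  (E : vec nx -> vec nx -> set (vec nx)) (t : R) (x : vec nx)
  (xi : (R -> 'I_N) -> (R -> vec nx)) : Prop :=
  non_anticipative t xi /\
  forall sigma, leader_signal t sigma ->
    exists xh, game_traj vd t x sigma (xi sigma) xh /\
      forall s, horizon t s -> E (xh s) (xd (sigma s)) (xi sigma s).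

Definition game_value (nx N : nat) (xd vd : 'I_N -> vec nx)
  (E : vec nx -> vec nx -> set (vec nx)) (g : vec nx -> R)
  (x : vec nx) (t : R) : \bar R :=
  ereal_inf [set ereal_sup [set cost g t xh | xh in
       [set xh | exists sigma, leader_signal t sigma /\
                   game_traj vd t x sigma (xi sigma) xh]]
    | xi in admissible_strategy xd vd E t x].

End Defs.

From HB Require Import structures.
From mathcomp Require Import all_boot all_order all_algebra.
From mathcomp Require Import all_classical all_reals all_analysis.
From mathcomp Require Import ring lra.
Set Implicit Arguments. Unset Strict Implicit. Unset Printing Implicit Defensive.
Import Order.TTheory GRing.Theory Num.Theory.
Import numFieldNormedType.Exports.
Local Open Scope classical_set_scope.
Local Open Scope ring_scope.

(* Against a leader signal i(.), the follower answers
   w(s) = f(x(s), u_{i(s)}) - v_{i(s)}, where x solves the true dynamics under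
   the data control u_{i(s)}.  This w lies in E(x(s); x_{i(s)}) by assumption,
   it is non-anticipative because solutions only depend on the past, and it
   makes the game trajectory coincide with that true trajectory.  Hence every
   payoff the leader can reach is a payoff of a control valued in {u_i}, which
   bounds the game value by the data-restricted value; the latter is at most V
   since {u_i} is contained in U.  The true trajectory is obtained by Picard
   iteration, which converges geometrically in the sup norm weighted by
   exp(2L(s + t)). *)

Section RowNorm.
Variables (R : realType) (n : nat).

Lemma row_entry_le_norm (a : 'rV[R]_n) k : `|a 0 k| <= `|a|.
Proof.
rewrite [leRHS]/Num.norm /= mx_normrE; apply/bigmax_geP; right => /=.
by exists (0, k).
Qed.

Lemma row_norm_le (a : 'rV[R]_n) c :
  0 <= c -> (forall k, `|a 0 k| <= c) -> `|a| <= c.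
Proof.
move=> c0 ak; rewrite [leLHS]/Num.norm /= mx_normrE; apply/bigmax_leP.
by split => // -[i j] _ /=; rewrite (ord1 i).
Qed.

Lemma lipschitz_row_entry (V : normedModType R) (h : V -> 'rV[R]_n) (L : R) k :
  (forall a b, `|h a - h b| <= L * `|a - b|) ->
  forall a b, `|h a 0 k - h b 0 k| <= L * `|a - b|.
Proof.
move=> hL a b; apply: le_trans (hL a b).
by have := row_entry_le_norm (h a - h b) k; rewrite !mxE.
Qed.

Lemma cvg_row_entries {T : Type} (F : set_system T) {FF : Filter F}
    (y : T -> 'rV[R]_n) (v : 'rV[R]_n) :
  (forall k, (fun z => y z 0 k) @ F --> v 0 k) -> y @ F --> v.
Proof.
move=> yk; apply/cvgrPdist_le => e e0.
have : \forall z \near F, forall k, `|v 0 k - y z 0 k| <= e.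
  by apply: filter_forall => k; have /cvgrPdist_le := yk k; apply.
apply: filterS => z hz; apply: row_norm_le => [|k]; first exact: ltW.
by rewrite !mxE.
Qed.

End RowNorm.

Lemma lipschitz_continuous (R : realType) (V W : normedModType R)
    (h : V -> W) (L : R) :
  (forall a b, `|h a - h b| <= L * `|a - b|) -> continuous h.
Proof.
move=> hL a; apply/cvgrPdist_lt => e e0.
have L1 : 0 < `|L| + 1 by rewrite ltr_pwDr // ltr01.
have hL1 b : `|h a - h b| <= (`|L| + 1) * `|a - b|.
  apply: (le_trans (hL a b)); apply: ler_wpM2r => //.
  by apply: (le_trans (ler_norm L)); rewrite lerDl.
near=> b; apply: (le_lt_trans (hL1 b)); rewrite -ltr_pdivlMl //.
near: b; apply: cvgr_dist_lt; first exact: cvg_id.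
by rewrite mulr_gt0 ?invr_gt0.
Unshelve. all: by end_near.
Qed.

Section GeometricCauchy.
Variables (R : realType) (V : completeNormedModType R).
Variables (a : V ^nat) (c q : R).
Hypotheses (q_ge0 : 0 <= q) (q_lt1 : q < 1).
Hypothesis a_step : forall m, `|a m.+1 - a m| <= c * q ^+ m.

Let q1 : 1 - q != 0. Proof. by rewrite subr_eq0 eq_sym lt_eqF. Qed.

Let c_ge0 : 0 <= c.
Proof. by have := a_step 0; rewrite expr0 mulr1; apply: le_trans. Qed.

Lemma geometric_dist m k :
  `|a (m + k)%N - a m| <= c / (1 - q) * (q ^+ m - q ^+ (m + k)).
Proof.
elim: k => [|k IH]; first by rewrite addn0 !subrr normr0 mulr0.
rewrite addnS -(subrK (a (m + k)%N) (a (m + k).+1)) -addrA.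
apply: (le_trans (ler_normD _ _)); apply: (le_trans (lerD (a_step _) IH)).
rewrite le_eqVlt; apply/orP; left; apply/eqP.
by rewrite exprS; field.
Qed.

Lemma geometric_cvgn : cvgn a.
Proof.
rewrite (_ : a = fun m => a 0%N + series (telescope a) m); last first.
  by apply/funext => m; rewrite -eq_sum_telescope.
apply: is_cvgD; first exact: is_cvg_cst.
apply: normed_cvg; apply: (@series_le_cvg _ _ (geometric c q)).
- by move=> m; rewrite normr_ge0.
- by move=> m; rewrite /geometric /= mulr_ge0 ?exprn_ge0 ?c_ge0.
- exact: a_step.
by apply: is_cvg_geometric_series; rewrite ger0_norm.
Qed.

Lemma geometric_lim_dist m : `|limn a - a m| <= c / (1 - q) * q ^+ m.
Proof.
have la : (fun k => `|a k - a m|) @ \oo --> `|limn a - a m|.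
  by apply: cvg_norm; apply: cvgB; [exact: geometric_cvgn | exact: cvg_cst].
rewrite -(cvg_lim _ la) //; apply: limr_le.
  by apply/cvg_ex; exists `|limn a - a m|.
near=> k; have mk : (m <= k)%N by near: k; exists m.
rewrite -(subnKC mk); apply: (le_trans (geometric_dist _ _)).
apply: ler_wpM2l; first by rewrite divr_ge0 // subr_ge0 ltW.
by rewrite gerBl exprn_ge0.
Unshelve. all: by end_near.
Qed.

End GeometricCauchy.

Lemma norm_le_geometric_eq0 (R : realType) (V : normedModType R) (z : V) (c q : R) :
  0 <= q < 1 -> (forall m, `|z| <= c * q ^+ m) -> z = 0.
Proof.
move=> /andP[q0 q1] hz.
have cq : (fun m => c * q ^+ m) @ \oo --> c * 0.
  by apply: cvgM; [exact: cvg_cst | apply: cvg_expr; rewrite ger0_norm].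
rewrite mulr0 in cq; apply/normr0_eq0/eqP; rewrite eq_le normr_ge0 andbT.
rewrite -(cvg_lim _ cq) //; apply: limr_ge; first by apply/cvg_ex; exists 0.
exact: nearW.
Qed.

Section RealIntegrals.
Variable R : realType.
Local Notation mu := (@lebesgue_measure R).
Local Notation LR := (measurableTypeR R).

Lemma bounded_integrable (A : set R) (h : R -> R) (c : R) :
  measurable (A : set LR) -> (mu A < +oo)%E -> measurable_fun A h ->
  (forall z, A z -> `|h z| <= c) -> mu.-integrable A (EFin \o h).
Proof.
move=> mA muA mh hc; apply: measurable_bounded_integrable => //.
exists c; split; first exact: num_real.
by move=> M cM z Az; apply: le_trans (hc z Az) (ltW cM).
Qed.

Lemma integrable_subr (A : set R) (h1 h2 : R -> R) : measurable (A : set LR) ->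
  mu.-integrable A (EFin \o h1) -> mu.-integrable A (EFin \o h2) ->
  mu.-integrable A (EFin \o (h1 \- h2)).
Proof.
move=> mA ih1 ih2; rewrite (_ : EFin \o _ = (EFin \o h1) \- (EFin \o h2))%E.
  exact: integrableB.
by apply/funext => z; rewrite /= EFinB.
Qed.

Lemma le_normr_Rintegral_dom (A : set R) (h phi : R -> R) : measurable (A : set LR) ->
  mu.-integrable A (EFin \o h) -> mu.-integrable A (EFin \o phi) ->
  (forall z, A z -> `|h z| <= phi z) ->
  `|\int[mu]_(z in A) h z| <= \int[mu]_(z in A) phi z.
Proof.
move=> mA ih iphi hphi; apply: le_trans (le_normr_Rintegral mA ih) _.
by apply: le_Rintegral => //; exact: integrable_norm.
Qed.

Lemma le_normr_Rintegral_cst (A : set R) (h : R -> R) (c : R) :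
  measurable (A : set LR) -> (mu A < +oo)%E -> mu.-integrable A (EFin \o h) ->
  (forall z, A z -> `|h z| <= c) -> `|\int[mu]_(z in A) h z| <= c * fine (mu A).
Proof.
move=> mA muA ih hc; rewrite -Rintegral_cst //.
apply: le_normr_Rintegral_dom => //.
by apply: (bounded_integrable (c := `|c|)) => // *; rewrite lexx.
Qed.

Lemma continuous_expR_affine (l c : R) : continuous (fun z => expR (l * (z + c))).
Proof.
move=> z; apply: continuous_comp; last exact: continuous_expR.
by apply: cvgM; [exact: cvg_cst | apply: cvgD; [exact: cvg_id | exact: cvg_cst]].
Qed.

Lemma Rintegral_expR_affine (l c a b : R) : a < b ->
  \int[mu]_(z in `[a, b]) (expR (l * (z + c)) * l) =
  expR (l * (b + c)) - expR (l * (a + c)).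
Proof.
move=> ab; set e := fun z => expR (l * (z + c)).
have de (z : R) : is_derive z 1 e (expR (l * (z + c)) * l).
  apply: (is_derive1_comp (f := expR) (g := fun z => l * (z + c))).
  by apply: is_derive_eq; rewrite addr0; exact: mulr1.
have ce := @continuous_expR_affine l c.
have := @continuous_FTC2 R (fun z => e z * l) e a b ab.
rewrite /Rintegral => ->; first by rewrite -EFinB.
- by apply: continuous_subspaceT => z; apply: cvgM; [exact: ce | exact: cvg_cst].
- split; first by move=> z _; exact: (@ex_derive _ _ _ _ _ _ _ (de z)).
  + exact: cvg_at_right_filter (ce _).
  + exact: cvg_at_left_filter (ce _).
- by move=> z _; rewrite derive1E; exact: derive_val.
Qed.

End RealIntegrals.

Section Horizon.
Variables (R : realType) (t : R).
Local Notation mu := (@lebesgue_measure R).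
Local Notation LR := (measurableTypeR R).

Lemma measurable_horizon : measurable (horizon t : set LR).
Proof. exact: measurable_itv. Qed.

Lemma subset_itv_horizon s : horizon t s -> [set` `[-t, s]] `<=` horizon t.
Proof.
rewrite /horizon /= in_itv /= => /andP[_ s0] z; rewrite /= !in_itv /= => /andP[-> zs].
exact: le_trans zs s0.
Qed.

Lemma integrable_itv_horizon (f : R -> \bar R) s : horizon t s ->
  mu.-integrable (horizon t) f -> mu.-integrable [set` `[(- t)%R, s]] f.
Proof.
move=> hs; apply: (integrableS measurable_horizon _ (subset_itv_horizon hs)).
exact: measurable_itv.
Qed.

Lemma lebesgue_itv_horizon s : horizon t s ->
  (mu [set` `[(- t)%R, s]] < +oo)%E /\ fine (mu [set` `[(- t)%R, s]]) <= t.
Proof.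
rewrite /horizon /= in_itv /= => /andP[ts s0].
rewrite lebesgue_measure_itv /= lte_fin; case: ifP => _ /=; last by split => //=; lra.
by split; [rewrite ltry | lra].
Qed.

Lemma lebesgue_horizon_lty : 0 <= t -> (mu (horizon t) < +oo)%E.
Proof.
move=> t0; apply: (@lebesgue_itv_horizon 0 _).1.
by rewrite /horizon /= in_itv /= lexx andbT oppr_le0.
Qed.

Lemma measurable_fun_leader_signal (N : nat) (sigma : R -> 'I_N)
    (phi : 'I_N -> R -> R) :
  leader_signal t sigma -> (forall i, measurable_fun (horizon t) (phi i)) ->
  measurable_fun (horizon t) (fun s => phi (sigma s) s).
Proof.
move=> hsigma mphi.
apply: (eq_measurable_fun (fun s => \sum_(i < N)
   (\1_(horizon t `&` sigma @^-1` [set i]) s * phi i s))).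
  move=> s; rewrite inE => hs; rewrite (bigD1 (sigma s)) //= big1 ?addr0.
    by rewrite indicE mem_set ?mul1r.
  move=> i neq_i; rewrite indicE memNset ?mul0r // => -[_ /= si].
  by rewrite si eqxx in neq_i.
by apply: measurable_sum => i; apply: measurable_realfun.measurable_funM.
Qed.

End Horizon.

Lemma sol_int_eq (R : realType) (n : nat) (t : R) (x0 : 'rV[R]_n)
    (h xs ys : R -> 'rV[R]_n) :
  sol_int t x0 h xs -> sol_int t x0 h ys -> forall s, horizon t s -> xs s = ys s.
Proof.
move=> [_ hxs] [_ hys] s hs; apply/rowP => k; apply: EFin_inj.
by rewrite hxs // hys.
Qed.

Lemma eq_cost (R : realType) (n : nat) (g : 'rV[R]_n -> R) (t : R)
    (xs ys : R -> 'rV[R]_n) :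
  (forall s, horizon t s -> xs s = ys s) -> cost g t xs = cost g t ys.
Proof.
by move=> eq_xy; rewrite /cost; congr ereal_inf; apply: eq_imagel => s /eq_xy ->.
Qed.

Lemma le_value_fun (R : realType) (nx nu : nat)
    (f : 'rV[R]_nx -> 'rV[R]_nu -> 'rV[R]_nx) (g : 'rV[R]_nx -> R)
    (A B : set 'rV[R]_nu) (x : 'rV[R]_nx) (t : R) :
  A `<=` B -> (value_fun f g A x t <= value_fun f g B x t)%E.
Proof.
move=> AB; apply: le_ereal_sup => _ [xs [u [[mu hu] hsol]] <-].
by exists xs => //; exists u; split => //; split => // s /hu /AB.
Qed.

Section Picard.
Variables (R : realType) (n : nat) (t : R) (x : 'rV[R]_n).
Variable F : R -> 'rV[R]_n -> 'rV[R]_n.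
Local Notation mu := (@lebesgue_measure R).

Fixpoint picard (m : nat) : R -> 'rV[R]_n :=
  if m is m'.+1 then
    fun s => \row_k (x 0 k + \int[mu]_(z in `[-t, s]) F z (picard m' z) 0 k)
  else fun _ => x.

Definition picard_limit (s : R) : 'rV[R]_n :=
  \row_k limn (fun m => picard m s 0 k).

Variables (L B : R).
Hypotheses (t_ge0 : 0 <= t) (L_gt0 : 0 < L).
Hypothesis F_lipschitz :
  forall s a b, horizon t s -> `|F s a - F s b| <= L * `|a - b|.
Hypothesis F_bounded : forall s, horizon t s -> `|F s x| <= B.
Hypothesis F_measurable : forall y : R -> 'rV[R]_n,
  {within horizon t, continuous y} ->
  forall k, measurable_fun (horizon t) (fun s => F s (y s) 0 k).

Let horizon0 : horizon t 0.
Proof. by rewrite /horizon /= in_itv /= lexx andbT oppr_le0. Qed.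

Let B_ge0 : 0 <= B.
Proof. exact: le_trans (normr_ge0 _) (F_bounded horizon0). Qed.

Lemma F_entry_lipschitz s k a b : horizon t s ->
  `|F s a 0 k - F s b 0 k| <= L * `|a - b|.
Proof.
by move=> hs; apply: lipschitz_row_entry => a' b'; exact: F_lipschitz.
Qed.

Lemma F_entry_growth s k a : horizon t s -> `|F s a 0 k| <= B + L * `|a - x|.
Proof.
move=> hs; rewrite -(subrK (F s x) (F s a)) addrC.
apply: le_trans (row_entry_le_norm _ k) _; apply: le_trans (ler_normD _ _) _.
by apply: lerD; [exact: F_bounded | exact: F_lipschitz].
Qed.

Lemma integrable_F_comp (y : R -> 'rV[R]_n) C k :
  measurable_fun (horizon t) (fun s => F s (y s) 0 k) ->
  (forall s, horizon t s -> `|y s - x| <= C) ->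
  mu.-integrable (horizon t) (fun s => (F s (y s) 0 k)%:E).
Proof.
move=> my hC; apply: (bounded_integrable (c := B + L * C)) => //.
- exact: measurable_horizon.
- exact: lebesgue_horizon_lty.
- move=> s hs; apply: le_trans (F_entry_growth k _ hs) _.
  by rewrite lerD2l; apply: ler_wpM2l; [exact: ltW | exact: hC].
Qed.

Lemma picard_regular m : {within horizon t, continuous picard m} /\
  exists C, forall s, horizon t s -> `|picard m s - x| <= C.
Proof.
elim: m => [|m [cont [C hC]]].
  split; first by apply: continuous_subspaceT => s; exact: cvg_cst.
  by exists 0 => s _; rewrite subrr normr0.
have intF k := integrable_F_comp (F_measurable cont k) hC.
have C_ge0 : 0 <= C := le_trans (normr_ge0 _) (hC 0 horizon0).
split.
  have cont_k k : {within horizon t, continuous (fun s => picard m.+1 s 0 k)}.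
    rewrite (_ : (fun s => _) = fun s => x 0 k +
      parameterized_integral mu (- t) s (fun z => F z (picard m z) 0 k)).
      move=> s; apply: cvgD; first exact: cvg_cst.
      have t0 : - t <= 0 by rewrite oppr_le0.
      exact: parameterized_integral_continuous t0 (intF k) s.
    by apply/funext => s; rewrite /= mxE.
  by move=> s; apply: cvg_row_entries => k; exact: cont_k.
exists (t * (B + L * C)) => s hs.
have BLC_ge0 : 0 <= B + L * C by rewrite addr_ge0 // mulr_ge0 // ltW.
apply: row_norm_le => [|k]; first exact: mulr_ge0.
have [mu_lty mu_le] := lebesgue_itv_horizon hs.
rewrite /= !mxE addrC addKr.
apply: le_trans (le_normr_Rintegral_cst (c := B + L * C) _ mu_lty
  (integrable_itv_horizon hs (intF k)) _) _.
- exact: measurable_itv.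
- move=> z /(subset_itv_horizon hs) hz; apply: le_trans (F_entry_growth k _ hz) _.
  by rewrite lerD2l; apply: ler_wpM2l; [exact: ltW | exact: hC].
by rewrite mulrC ler_wpM2r.
Qed.

Lemma integrable_F_picard m k :
  mu.-integrable (horizon t) (fun s => (F s (picard m s) 0 k)%:E).
Proof.
have [cont [C hC]] := picard_regular m.
exact: integrable_F_comp (F_measurable cont k) hC.
Qed.

Let q : R := 2^-1.
Let lam := 2 * L.

Let q_ge0 : 0 <= q. Proof. by rewrite invr_ge0. Qed.
Let q_lt1 : q < 1. Proof. by rewrite invf_lt1 // ltr1n. Qed.
Let lam_gt0 : 0 < lam. Proof. by rewrite mulr_gt0. Qed.

Lemma picard_succ_sub m s k : horizon t s ->
  (picard m.+2 s - picard m.+1 s) 0 k =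
  \int[mu]_(z in `[-t, s]) (F z (picard m.+1 z) 0 k - F z (picard m z) 0 k).
Proof.
move=> hs; rewrite /= !mxE RintegralB.
- by rewrite opprD addrACA subrr add0r.
- exact: measurable_itv.
- exact: integrable_itv_horizon hs (integrable_F_picard m.+1 k).
- exact: integrable_itv_horizon hs (integrable_F_picard m k).
Qed.

(* The weight [expR (lam * (s + t))] turns the Picard map into a contraction
   of ratio [L / lam = q]. *)
Lemma picard_dist_contract m D :
  (forall z, horizon t z ->
     `|picard m.+1 z - picard m z| <= D * expR (lam * (z + t))) ->
  forall s, horizon t s ->
    `|picard m.+2 s - picard m.+1 s| <= D * q * expR (lam * (s + t)).
Proof.
move=> hD s hs.
have D_ge0 : 0 <= D.
  have := le_trans (normr_ge0 _) (hD 0 horizon0).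
  by rewrite pmulr_lge0 // expR_gt0.
apply: row_norm_le => [|k]; first by rewrite !mulr_ge0 ?expR_ge0.
rewrite picard_succ_sub //.
move: (hs); rewrite /horizon /= in_itv /= => /andP[].
rewrite le_eqVlt => /predU1P[<- _|ts _].
  by rewrite set_itv1 Rintegral_set1 normr0 !mulr_ge0 ?expR_ge0.
pose e w := expR (lam * (w + t)) * lam.
have int_cont (h : R -> R) : continuous h -> mu.-integrable `[-t, s] (EFin \o h).
  move=> ch; apply: continuous_compact_integrable; first exact: segment_compact.
  exact: continuous_subspaceT.
have ce : continuous e.
  by move=> w; apply: cvgM; [exact: continuous_expR_affine | exact: cvg_cst].
have ie : mu.-integrable `[-t, s] (EFin \o e) := int_cont _ ce.
have iDe : mu.-integrable `[-t, s] (EFin \o (fun w => D * q * e w)).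
  by apply: int_cont => w; apply: cvgM; [exact: cvg_cst | exact: ce].
apply: le_trans (le_normr_Rintegral_dom _ _ iDe _) _.
- exact: measurable_itv.
- apply: integrable_subr; first exact: measurable_itv.
  + exact: integrable_itv_horizon hs (integrable_F_picard m.+1 k).
  + exact: integrable_itv_horizon hs (integrable_F_picard m k).
- move=> w hw; have hw' := subset_itv_horizon hs hw.
  apply: le_trans (F_entry_lipschitz _ _ _ hw') _.
  apply: le_trans (ler_wpM2l (ltW L_gt0) (hD w hw')) _.
  by rewrite le_eqVlt; apply/orP; left; apply/eqP; rewrite /e /lam /q; field.
rewrite RintegralZl; [|exact: measurable_itv | exact: ie].
rewrite Rintegral_expR_affine // addNr mulr0 expR0.
by apply: ler_wpM2l; rewrite ?mulr_ge0 // lerBlDr lerDl ler01.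
Qed.

Lemma picard_dist_expR m s : horizon t s ->
  `|picard m.+1 s - picard m s| <= t * B * q ^+ m * expR (lam * (s + t)).
Proof.
elim: m s => [|m IH] s hs; last first.
  by rewrite exprSr mulrA; apply: picard_dist_contract.
have [mu_lty mu_le] := lebesgue_itv_horizon hs.
have e_ge1 : 1 <= expR (lam * (s + t)).
  rewrite -expR0 ler_expR; apply: mulr_ge0; first exact: ltW.
  by move: hs; rewrite /horizon /= in_itv /= => /andP[ts _]; lra.
apply: row_norm_le => [|k]; first by rewrite !mulr_ge0 ?expR_ge0.
rewrite /= !mxE addrC addKr expr0 mulr1.
apply: le_trans (le_normr_Rintegral_cst (c := B) _ mu_lty
  (integrable_itv_horizon hs (integrable_F_picard 0 k)) _) _.
- exact: measurable_itv.
- move=> z /(subset_itv_horizon hs) hz.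
  by have := F_entry_growth k x hz; rewrite subrr normr0 mulr0 addr0.
apply: le_trans (ler_wpM2l B_ge0 mu_le) _.
by rewrite mulrC -[X in X <= _]mulr1 ler_wpM2l ?mulr_ge0.
Qed.

Let c := t * B * expR (lam * t).

Let K_ge0 : 0 <= c / (1 - q).
Proof.
apply: divr_ge0; last by rewrite subr_ge0 ltW.
by apply: mulr_ge0; [exact: mulr_ge0 | exact: expR_ge0].
Qed.

Lemma picard_dist m s : horizon t s -> `|picard m.+1 s - picard m s| <= c * q ^+ m.
Proof.
move=> hs; apply: le_trans (picard_dist_expR m hs) _.
rewrite /c [leRHS]mulrAC ler_wpM2l ?mulr_ge0 ?exprn_ge0 // ler_expR.
rewrite ler_pM2l // gerDr.
by move: hs; rewrite /horizon /= in_itv /= => /andP[].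
Qed.

Lemma picard_entry_dist m s k : horizon t s ->
  `|picard m.+1 s 0 k - picard m s 0 k| <= c * q ^+ m.
Proof.
move=> hs; apply: le_trans (picard_dist m hs).
by have := row_entry_le_norm (picard m.+1 s - picard m s) k; rewrite !mxE.
Qed.

Lemma picard_cvg s : horizon t s -> picard ^~ s @ \oo --> picard_limit s.
Proof.
move=> hs; apply: cvg_row_entries => k; rewrite mxE.
exact: geometric_cvgn q_ge0 q_lt1 (fun m => picard_entry_dist m k hs).
Qed.

Lemma picard_limit_dist m s : horizon t s ->
  `|picard_limit s - picard m s| <= c / (1 - q) * q ^+ m.
Proof.
move=> hs; apply: row_norm_le => [|k]; first by rewrite mulr_ge0 ?exprn_ge0.
rewrite !mxE.
exact: geometric_lim_dist q_ge0 q_lt1 (fun m => picard_entry_dist m k hs) m.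
Qed.

Lemma measurable_F_picard_limit k :
  measurable_fun (horizon t) (fun s => F s (picard_limit s) 0 k).
Proof.
apply: (measurable_realfun.measurable_fun_cvg (h := fun m s => F s (picard m s) 0 k)).
  by move=> m; exact: F_measurable (picard_regular m).1 k.
move=> s hs; apply: (continuous_cvg (h := fun a => F s a 0 k) _ _ (picard_cvg hs)).
by apply: (lipschitz_continuous (L := L)) => a b; exact: F_entry_lipschitz.
Qed.

Lemma integrable_F_picard_limit k :
  mu.-integrable (horizon t) (fun s => (F s (picard_limit s) 0 k)%:E).
Proof.
apply: (integrable_F_comp (C := c / (1 - q)) (measurable_F_picard_limit k)) => s hs.
by have := picard_limit_dist 0 hs; rewrite expr0 mulr1.
Qed.

Lemma picard_limit_fixpoint s k : horizon t s ->
  picard_limit s 0 k = x 0 k + \int[mu]_(z in `[-t, s]) F z (picard_limit z) 0 k.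
Proof.
move=> hs; set T := x 0 k + _; set K := c / (1 - q).
have [mu_lty mu_le] := lebesgue_itv_horizon hs.
apply/subr0_eq/(norm_le_geometric_eq0 (c := K * (1 + L * t)) (q := q)).
  by rewrite q_ge0 q_lt1.
move=> m; rewrite -(subrK (picard m.+1 s 0 k) (picard_limit s 0 k)) -addrA.
apply: le_trans (ler_normD _ _) _.
have lim_dist : `|picard_limit s 0 k - picard m.+1 s 0 k| <= K * q ^+ m.
  have := row_entry_le_norm (picard_limit s - picard m.+1 s) k.
  rewrite !mxE => /le_trans; apply; apply: le_trans (picard_limit_dist m.+1 hs) _.
  apply: ler_wpM2l; first exact: K_ge0.
  by rewrite exprS ler_piMl ?exprn_ge0 // ltW.
have iter_dist : `|picard m.+1 s 0 k - T| <= L * (K * q ^+ m) * t.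
  rewrite /T /= mxE opprD addrACA subrr add0r -RintegralB; first last.
  - exact: integrable_itv_horizon hs (integrable_F_picard_limit k).
  - exact: integrable_itv_horizon hs (integrable_F_picard m k).
  - exact: measurable_itv.
  apply: le_trans (le_normr_Rintegral_cst (c := L * (K * q ^+ m)) _ mu_lty _ _) _.
  - exact: measurable_itv.
  - apply: integrable_subr; first exact: measurable_itv.
    + exact: integrable_itv_horizon hs (integrable_F_picard m k).
    + exact: integrable_itv_horizon hs (integrable_F_picard_limit k).
  - move=> z hz; have hz' := subset_itv_horizon hs hz.
    apply: le_trans (F_entry_lipschitz _ _ _ hz') _.
    apply: ler_wpM2l; first exact: ltW.
    by rewrite distrC; exact: picard_limit_dist.
  apply: ler_wpM2l => //; apply: mulr_ge0; first exact: ltW.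
  by apply: mulr_ge0; [exact: K_ge0 | exact: exprn_ge0].
apply: le_trans (lerD lim_dist iter_dist) _.
by rewrite le_eqVlt; apply/orP; left; apply/eqP; ring.
Qed.

Lemma picard_limit_sol : sol_int t x (fun s => F s (picard_limit s)) picard_limit.
Proof.
split=> [k | s hs k]; first exact: integrable_F_picard_limit.
rewrite (picard_limit_fixpoint k hs) EFinD; congr (_ + _)%E.
rewrite /Rintegral fineK //; apply: integrable_fin_num; first exact: measurable_itv.
exact: integrable_itv_horizon hs (integrable_F_picard_limit k).
Qed.

End Picard.

Lemma picard_limit_causal (R : realType) (n : nat) (t : R) (x : 'rV[R]_n)
    (F1 F2 : R -> 'rV[R]_n -> 'rV[R]_n) s :
  (forall z, [set` `[-t, s]] z -> F1 z = F2 z) ->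
  forall z, [set` `[-t, s]] z -> picard_limit t x F1 z = picard_limit t x F2 z.
Proof.
move=> eqF.
have eq_picard m z : [set` `[-t, s]] z -> picard t x F1 m z = picard t x F2 m z.
  elim: m z => [//|m IH] z hz /=; apply/rowP => k; rewrite !mxE; congr (_ + _).
  apply: eq_Rintegral => w; rewrite inE /= in_itv /= => /andP[tw wz].
  have hw : [set` `[-t, s]] w.
    by move: hz; rewrite /= !in_itv /= tw => /andP[_]; exact: le_trans wz.
  by rewrite IH // eqF.
move=> z hz; apply/rowP => k; rewrite !mxE.
by under eq_fun do rewrite eq_picard //.
Qed.

Section DataStrategy.
Variables (R : realType) (nx nu N : nat).
Variables (f : 'rV[R]_nx -> 'rV[R]_nu -> 'rV[R]_nx) (g : 'rV[R]_nx -> R).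
Variables (xd vd : 'I_N -> 'rV[R]_nx) (ud : 'I_N -> 'rV[R]_nu).
Variable E : 'rV[R]_nx -> 'rV[R]_nx -> set 'rV[R]_nx.
Variables (L t : R) (x : 'rV[R]_nx).
Hypotheses (L_gt0 : 0 < L) (t_ge0 : 0 <= t).
Hypothesis f_lipschitz : forall i a b, `|f a (ud i) - f b (ud i)| <= L * `|a - b|.
Hypothesis E_residual : forall i a, E a (xd i) (f a (ud i) - vd i).

Definition data_traj (sigma : R -> 'I_N) : R -> 'rV[R]_nx :=
  picard_limit t x (fun s a => f a (ud (sigma s))).

Definition data_strategy (sigma : R -> 'I_N) (s : R) : 'rV[R]_nx :=
  f (data_traj sigma s) (ud (sigma s)) - vd (sigma s).

Lemma data_traj_sol sigma : leader_signal t sigma ->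
  sol_int t x (fun s => f (data_traj sigma s) (ud (sigma s))) (data_traj sigma).
Proof.
move=> hsigma; apply: (picard_limit_sol (B := \sum_i `|f x (ud i)|) t_ge0 L_gt0
  (fun s a b _ => f_lipschitz (sigma s) a b)).
  by move=> s _; rewrite (bigD1 (sigma s)) //= lerDl sumr_ge0.
move=> y cy k.
apply: (measurable_fun_leader_signal (phi := fun i s => f (y s) (ud i) 0 k)) => // i.
apply: measurable_realfun.subspace_continuous_measurable_fun.
  exact: measurable_horizon.
move=> s; apply: (continuous_cvg (h := fun a => f a (ud i) 0 k) _ _ (cy s)).
by apply: (lipschitz_continuous (L := L)); apply: lipschitz_row_entry.
Qed.

Lemma game_integrand_data_strategy sigma :
  (fun s => vd (sigma s) + data_strategy sigma s) =
  (fun s => f (data_traj sigma s) (ud (sigma s))).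
Proof. by apply/funext => s; rewrite /data_strategy addrC subrK. Qed.

Lemma data_strategy_admissible : admissible_strategy xd vd E t x data_strategy.
Proof.
split.
  move=> sigma1 sigma2 _ _ s _ eq12 z hz.
  have eqF w : [set` `[-t, s]] w ->
      (fun a => f a (ud (sigma1 w))) = (fun a => f a (ud (sigma2 w))).
    by move=> hw; rewrite (eq12 w hw).
  by rewrite /data_strategy /data_traj (picard_limit_causal x eqF hz) (eq12 z hz).
move=> sigma hsigma; exists (data_traj sigma).
split; last by move=> s _; exact: E_residual.
by rewrite /game_traj game_integrand_data_strategy; exact: data_traj_sol.
Qed.

Lemma game_value_le_data_value :
  (game_value xd vd E g x t <= value_fun f g (range ud) x t)%E.
Proof.
apply: le_trans (ereal_inf_lbound _) _.
  by exists data_strategy; [exact: data_strategy_admissible |].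
apply: ge_ereal_sup => _ [xh [sigma [hsigma htraj]] <-].
rewrite /game_traj game_integrand_data_strategy in htraj.
rewrite (eq_cost g (sol_int_eq htraj (data_traj_sol hsigma))).
apply: ereal_sup_ubound; exists (data_traj sigma) => //.
exists (fun s => ud (sigma s)); split; last exact: data_traj_sol.
split; last by move=> s _; exists (sigma s).
move=> k; apply: (measurable_fun_leader_signal (phi := fun i _ => ud i 0 k) hsigma).
by move=> i; exact: measurable_cst.
Qed.

End DataStrategy.

Theorem theorem4 (R : realType) (nx nu N : nat)
  (f : 'rV[R]_nx -> 'rV[R]_nu -> 'rV[R]_nx) (g : 'rV[R]_nx -> R)
  (U : set 'rV[R]_nu)
  (xd : 'I_N -> 'rV[R]_nx) (ud : 'I_N -> 'rV[R]_nu) (vd : 'I_N -> 'rV[R]_nx)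
  (E : 'rV[R]_nx -> 'rV[R]_nx -> set 'rV[R]_nx) :
  (exists Lf : R, forall u, U u -> forall x y : 'rV[R]_nx,
      `|f x u - f y u| <= Lf * `|x - y|) ->
  (exists Lg : R, forall x y : 'rV[R]_nx, `|g x - g y| <= Lg * `|x - y|) ->
  (forall i, U (ud i)) ->
  (forall i, vd i = f (xd i) (ud i)) ->
  (forall x y, closed (E x y)) ->
  (forall i x, E x (xd i) (f x (ud i) - vd i)) ->
  forall (x : 'rV[R]_nx) (t : R), 0 <= t ->
    (game_value xd vd E g x t <= value_fun f g (range ud) x t)%E /\
    (value_fun f g (range ud) x t <= value_fun f g U x t)%E.
Proof.
move=> [Lf f_lip] _ ud_U _ _ E_res x t t_ge0.
split; last by apply: le_value_fun => _ [i _ <-]; exact: ud_U.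
have L_gt0 : 0 < Num.max Lf 1 by rewrite lt_max ltr01 orbT.
apply: (game_value_le_data_value g x L_gt0 t_ge0 _ E_res) => i a b.
apply: le_trans (f_lip _ (ud_U i) a b) _.
by rewrite ler_wpM2r // le_max lexx.
Qed.
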